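(* Let $G$ be a finite abelian group (written multiplicatively), let $R \subseteq \mathbb{Q}$ be a subring, and let $n \in \mathbb{N}$. The map \[ f: R \otimes_{\mathbb{Z}} Q_n(\mathbb{Z},G) \to Q_n(R,G), \qquad r\otimes\Big(\sum_{g\in G} \alpha_g [g] + I(\mathbb{Z}, G)^{n+1}\Big) \mapsto \sum_{g\in G} r\alpha_g [g] + I(R, G)^{n+1} \] is a well-defined isomorphism of $R$-modules, where $R \otimes_{\mathbb{Z}} Q_n(\mathbb{Z},G)$ is regarded as an $R$-module by extension of scalars.
   Context: For a ring $A$ (commutative with identity) and a group $G$, $A[G]$ denotes the group algebra and $[g]$ the element $g\in G$ viewed in $A[G]$. The augmentation map $\mathrm{aug}: A[G]\to A$ is the $A$-linear map with $[g]\mapsto 1$ for all $g\in G$; the augmentation ideal is $I(A,G) = \ker(\mathrm{aug})$, and $Q_n(A,G) = I(A,G)^n / I(A,G)^{n+1}$. *)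

From HB Require Import structures.
From mathcomp Require Import all_boot all_order all_algebra all_fingroup.
From mathcomp Require Import boolp.

Set Implicit Arguments.
Unset Strict Implicit.
Unset Printing Implicit Defensive.

Import GRing.Theory.
Local Open Scope ring_scope.
Local Open Scope quotient_scope.

(* Group algebra A[G] of a finite group G over a commutative ring A,   *)
(* with elements the (finitely supported) functions G -> A,            *)
(* i.e. sum_g a(g) [g].  Multiplication is convolution (NOT the        *)
(* pointwise product carried by {ffun G -> A}).                        *)
Section GroupAlgebra.
Variables (A : comNzRingType) (G : finGroupType).

Local Notation AG := {ffun G -> A}.

Definition gelt (g : G) : AG := [ffun h => (h == g)%:R].

Definition conv (a b : AG) : AG :=
  [ffun g => \sum_(h : G) a h * b (h^-1 * g)%g].

Definition gscale (s : A) (a : AG) : AG := [ffun g => s * a g].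

Definition aug (a : AG) : A := \sum_(g : G) a g.

Fixpoint Ipow (n : nat) : AG -> Prop :=
  match n with
  | 0 => fun _ => True
  | k.+1 => fun x => exists s : seq (AG * AG),
      (forall p, p \in s -> aug p.1 = 0 /\ Ipow k p.2) /\
      x = \sum_(p <- s) conv p.1 p.2
  end.

Definition Ipred (n : nat) : {pred AG} := fun x => `[< Ipow n x >].

Lemma conv0l b : conv 0 b = 0.
Proof. by apply/ffunP=> g; rewrite !ffunE big1 // => h _; rewrite ffunE mul0r. Qed.

Lemma convNl a b : conv (- a) b = - conv a b.
Proof.
apply/ffunP=> g; rewrite !ffunE -sumrN; apply: eq_bigr => h _.
by rewrite ffunE mulNr.
Qed.

Lemma convZl s a b : conv (gscale s a) b = gscale s (conv a b).
Proof.
apply/ffunP=> g; rewrite !ffunE mulr_sumr; apply: eq_bigr => h _.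
by rewrite ffunE mulrA.
Qed.

Lemma augN a : aug (- a) = - aug a.
Proof. by rewrite /aug -sumrN; apply: eq_bigr => g _; rewrite ffunE. Qed.

Lemma augZ s a : aug (gscale s a) = s * aug a.
Proof. by rewrite /aug mulr_sumr; apply: eq_bigr => g _; rewrite ffunE. Qed.

Lemma gscaleN s a : gscale s (- a) = - gscale s a.
Proof. by apply/ffunP=> g; rewrite !ffunE mulrN. Qed.

Lemma gscale_sum s (r : seq (AG * AG)) (F : AG * AG -> AG) :
  gscale s (\sum_(p <- r) F p) = \sum_(p <- r) gscale s (F p).
Proof.
apply/ffunP=> g; rewrite ffunE !sum_ffunE mulr_sumr.
by apply: eq_bigr => p _; rewrite ffunE.
Qed.

Lemma Ipred_zmod n : zmod_closed (Ipred n).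
Proof.
case: n => [|n]; first by split=> // *; apply/asboolP.
split; first by apply/asboolP; exists [::]; split=> //; rewrite big_nil.
move=> x y /asboolP [s [Hs ->]] /asboolP [t [Ht ->]]; apply/asboolP.
exists (s ++ map (fun p => (- p.1, p.2)) t); split.
  move=> p; rewrite mem_cat => /orP [/Hs //|/mapP [q /Ht [q1 q2] ->]] /=.
  by rewrite augN q1 oppr0.
rewrite big_cat big_map /= -sumrN; congr (_ + _).
by apply: eq_bigr => p _; rewrite convNl.
Qed.

HB.instance Definition _ n := GRing.isZmodClosed.Build AG (Ipred n) (Ipred_zmod n).

Lemma Ipred_scale n s x : x \in Ipred n -> gscale s x \in Ipred n.
Proof.
case: n => [|n]; first by move=> _; apply/asboolP.
move=> /asboolP [t [Ht ->]]; apply/asboolP.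
exists (map (fun p => (gscale s p.1, p.2)) t); split.
  move=> p /mapP [q /Ht [q1 q2] ->] /=.
  by rewrite augZ q1 mulr0.
rewrite big_map gscale_sum; apply: eq_bigr => p _.
by rewrite convZl.
Qed.

Record Ielt (n : nat) := MkIelt { Ival : AG; Ivalin : Ival \in Ipred n }.

Section Quot.
Variable n : nat.

HB.instance Definition _ := [isSub for @Ival n].
HB.instance Definition _ := [Choice of Ielt n by <:].
HB.instance Definition _ := [SubChoice_isSubZmodule of Ielt n by <:].

Definition Inext : {pred Ielt n} := fun x => Ival x \in Ipred n.+1.

Lemma Inext_zmod : zmod_closed Inext.
Proof.
split; first exact: (rpred0 (Ipred n.+1)).
move=> x y hx hy; change (Ival x - Ival y \in Ipred n.+1).
exact: rpredB.
Qed.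

HB.instance Definition _ := GRing.isZmodClosed.Build (Ielt n) Inext Inext_zmod.

Definition Qn := Quotient.quot Inext.
HB.instance Definition _ := GRing.Zmodule.on Qn.

Definition Iscale (s : A) (x : Ielt n) : Ielt n :=
  MkIelt (Ipred_scale s (Ivalin x)).

Lemma Iscale_val s x : Ival (Iscale s x) = gscale s (Ival x).
Proof. by []. Qed.

Lemma IscaleA a b v : Iscale a (Iscale b v) = Iscale (a * b) v.
Proof. by apply: val_inj; apply/ffunP=> g; rewrite /= !ffunE mulrA. Qed.

Lemma Iscale1 : left_id 1 Iscale.
Proof. by move=> v; apply: val_inj; apply/ffunP=> g; rewrite /= !ffunE mul1r. Qed.

Lemma IscaleDr : right_distributive Iscale +%R.
Proof.
move=> a u v; apply: val_inj; apply/ffunP=> g.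
by rewrite /= !ffunE mulrDr.
Qed.

Lemma IscaleDl v : {morph Iscale^~ v : a b / a + b}.
Proof.
move=> a b; apply: val_inj; apply/ffunP=> g.
by rewrite /= !ffunE mulrDl.
Qed.

HB.instance Definition _ :=
  GRing.Zmodule_isLmodule.Build A (Ielt n) IscaleA Iscale1 IscaleDr IscaleDl.

Lemma Inext_scale s x : x \in Inext -> s *: x \in Inext.
Proof. exact: Ipred_scale. Qed.

Definition qscale (s : A) (q : Qn) : Qn := \pi_Qn (s *: generic_quotient.repr q).

Lemma pi_scale s x : \pi_Qn (s *: x) = qscale s (\pi_Qn x).
Proof.
rewrite /qscale; apply/eqP; rewrite -Quotient.idealrBE -scalerBr.
apply: Inext_scale; rewrite Quotient.idealrBE.
by apply/eqP; exact: (esym (reprK _)).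

Qed.

Lemma qscaleA a b v : qscale a (qscale b v) = qscale (a * b) v.
Proof. by rewrite -[v](@reprK _ Qn) -!pi_scale scalerA. Qed.

Lemma qscale1 : left_id 1 qscale.
Proof. by move=> v; rewrite -[v](@reprK _ Qn) -pi_scale scale1r. Qed.

Lemma qscaleDr : right_distributive qscale +%R.
Proof.
move=> a u v; rewrite -[u](@reprK _ Qn) -[v](@reprK _ Qn) -pi_addr -!pi_scale scalerDr.
by rewrite pi_addr.
Qed.

Lemma qscaleDl v : {morph qscale^~ v : a b / a + b}.
Proof. by move=> a b; rewrite -[v](@reprK _ Qn) -!pi_scale scalerDl pi_addr. Qed.

HB.instance Definition _ :=
  GRing.Zmodule_isLmodule.Build A Qn qscaleA qscale1 qscaleDr qscaleDl.

End Quot.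
End GroupAlgebra.

Arguments Qn A G n : clear implicits.
Arguments Ielt A G n : clear implicits.

Section MapCoef.
Variables (A B : comNzRingType) (G : finGroupType) (phi : {rmorphism A -> B}).

Definition mapAG (a : {ffun G -> A}) : {ffun G -> B} := [ffun g => phi (a g)].

Lemma mapAG_conv a b : mapAG (conv a b) = conv (mapAG a) (mapAG b).
Proof.
apply/ffunP=> g; rewrite !ffunE rmorph_sum; apply: eq_bigr => h _.
by rewrite rmorphM !ffunE.
Qed.

Lemma mapAG_aug a : aug (mapAG a) = phi (aug a).
Proof. by rewrite /aug rmorph_sum; apply: eq_bigr => g _; rewrite ffunE. Qed.

Lemma mapAG_sum (r : seq ({ffun G -> A} * {ffun G -> A})) F :
  mapAG (\sum_(p <- r) F p) = \sum_(p <- r) mapAG (F p).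
Proof.
apply/ffunP=> g; rewrite ffunE !sum_ffunE rmorph_sum.
by apply: eq_bigr => p _; rewrite ffunE.
Qed.

Lemma mapAG_Ipred n x : x \in @Ipred A G n -> mapAG x \in @Ipred B G n.
Proof.
elim: n x => [|n IH] x; first by move=> _; apply/asboolP.
move=> /asboolP [t [Ht ->]]; apply/asboolP.
exists (map (fun p => (mapAG p.1, mapAG p.2)) t); split.
  move=> p /mapP [q /Ht [q1 q2] ->] /=; split.
    by rewrite mapAG_aug q1 rmorph0.
  by have /asboolP := IH _ (asboolT q2).
by rewrite big_map mapAG_sum; apply: eq_bigr => p _; rewrite mapAG_conv.
Qed.

Definition mapIelt n (x : Ielt A G n) : Ielt B G n :=
  MkIelt (mapAG_Ipred (Ivalin x)).

End MapCoef.

(* (T, t) is R (x)_Z M, regarded as an R-module by extension of          *)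
(* scalars, with t r x = r (x) x: t is Z-bilinear, universal among      *)
(* Z-bilinear maps out of R x M (universal property of the tensor       *)
(* product), and R acts on T by s *: (r (x) x) = (s r) (x) x.            *)
Definition biadditive (U M V : zmodType) (b : U -> M -> V) : Prop :=
  (forall x, zmod_morphism (b ^~ x)) /\ (forall r, zmod_morphism (b r)).

Definition is_scalar_ext_tensor (R : comNzRingType) (M : zmodType)
    (T : lmodType R) (t : R -> M -> T) : Prop :=
  [/\ biadditive t,
      (forall (s r : R) (x : M), t (s * r) x = s *: t r x),
      (forall (V : zmodType) (b : R -> M -> V), biadditive b ->
         exists h : {additive T -> V}, forall r x, h (t r x) = b r x) &
      (forall (V : zmodType) (h1 h2 : {additive T -> V}),
         (forall r x, h1 (t r x) = h2 (t r x)) -> h1 =1 h2)].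

From HB Require Import structures.
From mathcomp Require Import all_boot all_order all_algebra all_fingroup.
From mathcomp Require Import boolp ring.
Set Implicit Arguments.
Unset Strict Implicit.
Unset Printing Implicit Defensive.
Import GRing.Theory Num.Theory.
Local Open Scope ring_scope.
Local Open Scope quotient_scope.

(* Since R is a subring of Q, every r in R is m/d with 1/d in R.  Hence every
   element of I(R,G)^n is (1/d) y with y in I(Z,G)^n, and every element of
   R (x) Q_n(Z,G) is a pure tensor (1/d) (x) [y].  The map f comes from the
   universal property of the tensor product, and its inverse sends
   [(1/d) y] to (1/d) (x) [y].  This is well defined: if (1/d) y lies in
   I(R,G)^(n+1), then clearing denominators (Z embeds in R) gives d' y in
   I(Z,G)^(n+1) for some d' > 0, so (1/d) (x) [y] = (1/(d d')) (x) [d' y] = 0. *)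

Section RatSubring.
Variables (R : comNzRingType) (iota : {rmorphism R -> rat}).
Hypothesis iota_inj : injective iota.

Lemma rmorph_rat_intr_inj : injective (fun z : int => z%:~R : R).
Proof. by move=> m n /(congr1 iota); rewrite !rmorph_int => /intr_inj. Qed.

Lemma rat_subring_fraction r : exists (w : R) (d : nat) (m : int),
  w *+ d = 1 /\ r = w *~ m.
Proof.
(* If [iota r = N/D] and [u N + v D = 1], then [iota (r u + v) = 1/D]. *)
set x := iota r; have [u [v]] := Bezoutz (numq x) (denq x).
rewrite /gcdz (eqP (coprime_num_den x)) => /(congr1 (intr : int -> rat)).
rewrite intrD !intrM numqE rmorph1 => Bezout.
have denE : (`|denq x|%N%:R : rat) = (denq x)%:~R.
  by rewrite natr_absz gtr0_norm ?denq_gt0.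
exists (r *~ u + v%:~R), `|denq x|%N, (numq x); split; apply: iota_inj.
  rewrite rmorph1 rmorphMn rmorphD rmorphMz rmorph_int -mulr_natr denE.
  rewrite -[RHS]Bezout -/x -mulrzr.
  clear Bezout denE; move: x (u%:~R) (v%:~R) ((denq x)%:~R) => X U V D.
  by ring.
rewrite rmorphMz rmorphD !rmorphMz rmorph1 -/x -[_ *~ u]mulrzr -mulrzr numqE.
rewrite -[LHS]mulr1 -[in LHS]Bezout.
clear Bezout denE; move: x (u%:~R) (v%:~R) ((denq x)%:~R) => X U V D.
by ring.
Qed.

End RatSubring.

Definition additive_of (U V : zmodType) (f : U -> V) (f_add : zmod_morphism f) :
  {additive U -> V} :=
  HB.pack_for {additive U -> V} f (GRing.isZmodMorphism.Build U V f f_add).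

Definition linear_of (R : comNzRingType) (U V : lmodType R) (f : U -> V)
    (f_add : zmod_morphism f) (f_scale : scalable f) : {linear U -> V} :=
  HB.pack_for {linear U -> V} f (GRing.isZmodMorphism.Build U V f f_add)
    (GRing.isScalable.Build R U V *:%R f f_scale).

Section UnitFraction.
Variable R : comNzRingType.
Implicit Types (w : R) (d : nat).

Lemma mulrn_eq1_lreg w d : w *+ d = 1 -> GRing.lreg w.
Proof.
by move=> wd a b eq_ab; rewrite -[a]mul1r -[b]mul1r -wd !mulrnAl eq_ab.
Qed.

Lemma mulrn_eq1M w1 w2 d1 d2 :
  w1 *+ d1 = 1 -> w2 *+ d2 = 1 -> (w1 * w2) *+ (d1 * d2) = 1.
Proof. by move=> wd1 wd2; rewrite mulrnA -mulrnAl wd1 mul1r wd2. Qed.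

Lemma mulrn_eq1_cross w1 w2 d1 d2 a1 a2 :
  w1 *+ d1 = 1 -> w2 *+ d2 = 1 -> w1 * a1 = w2 * a2 -> a1 *+ d2 = a2 *+ d1.
Proof.
move=> wd1 wd2 eq_a; apply: (mulrn_eq1_lreg (mulrn_eq1M wd1 wd2)).
have -> : w1 * w2 * (a1 *+ d2) = w1 * a1 * (w2 *+ d2) by ring.
have -> : w1 * w2 * (a2 *+ d1) = w2 * a2 * (w1 *+ d1) by ring.
by rewrite wd1 wd2 eq_a.
Qed.

End UnitFraction.

Section Biadditive.
Variables (R : comNzRingType) (M V : zmodType) (b : R -> M -> V).
Hypothesis b_biadd : biadditive b.

Let b_addl x := additive_of (b_biadd.1 x).
Let b_addr r := additive_of (b_biadd.2 r).

Lemma biadd0r r : b r 0 = 0.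
Proof. exact: (raddf0 (b_addr r)). Qed.

Lemma biaddNr r x : b r (- x) = - b r x.
Proof. exact: (raddfN (b_addr r)). Qed.

Lemma biadd_mulrn r x k : b (r *+ k) x = b r (x *+ k).
Proof.
transitivity (b r x *+ k); first exact: (raddfMn (b_addl x)).
exact/esym/(raddfMn (b_addr r)).
Qed.

Lemma biadd_mulrz r x m : b (r *~ m) x = b r (x *~ m).
Proof.
transitivity (b r x *~ m); first exact: (raddfMz (b_addl x)).
exact/esym/(raddfMz (b_addr r)).
Qed.

Lemma biadd_common_denomD w1 w2 d1 d2 x1 x2 :
  w1 *+ d1 = 1 -> w2 *+ d2 = 1 ->
  b w1 x1 + b w2 x2 = b (w1 * w2) (x1 *+ d2 + x2 *+ d1).
Proof.
move=> wd1 wd2; rewrite [RHS](raddfD (b_addr _)) /= -!biadd_mulrn.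
by rewrite -mulrnAr wd2 mulr1 mulrC -mulrnAr wd1 mulr1.
Qed.

Lemma biadd_common_denomB w1 w2 d1 d2 x1 x2 :
  w1 *+ d1 = 1 -> w2 *+ d2 = 1 ->
  b w1 x1 - b w2 x2 = b (w1 * w2) (x1 *+ d2 - x2 *+ d1).
Proof.
move=> wd1 wd2.
by rewrite -biaddNr (biadd_common_denomD x1 (- x2) wd1 wd2) mulNrn.
Qed.

End Biadditive.

Lemma scale_biadditive (R : comNzRingType) (V : lmodType R) :
  biadditive (fun (r : R) (v : V) => r *: v).
Proof. by split=> [v r s | r u v]; rewrite ?scalerBl ?scalerBr. Qed.

Lemma biadditive_comp (R : comNzRingType) (M M' V V' : zmodType)
    (b : R -> M' -> V) (f : {additive M -> M'}) (g : {additive V -> V'}) :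
  biadditive b -> biadditive (fun r x => g (b r (f x))).
Proof.
move=> [b_addl b_addr]; split=> [x r s | r x y].
  by rewrite b_addl raddfB.
by rewrite raddfB b_addr raddfB.
Qed.

Section GroupAlgebraFacts.
Variables (A B : comNzRingType) (G : finGroupType) (phi : {rmorphism A -> B}).

Lemma gscale_biadditive : biadditive (@gscale A G).
Proof.
by split=> [a r s | r a b]; apply/ffunP=> g; rewrite !ffunE ?mulrBl ?mulrBr.
Qed.

Lemma gscaleA (r s : A) (a : {ffun G -> A}) :
  gscale r (gscale s a) = gscale (r * s) a.
Proof. by apply/ffunP=> g; rewrite !ffunE mulrA. Qed.

Lemma convZr (s : A) (a b : {ffun G -> A}) :
  conv a (gscale s b) = gscale s (conv a b).
Proof.
apply/ffunP=> g; rewrite !ffunE mulr_sumr; apply: eq_bigr => h _.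
by rewrite ffunE mulrCA.
Qed.

Lemma mapAG_is_zmod_morphism : zmod_morphism (@mapAG A B G phi).
Proof. by move=> a b; apply/ffunP=> g; rewrite !ffunE rmorphB. Qed.

HB.instance Definition _ :=
  GRing.isZmodMorphism.Build _ _ (@mapAG A B G phi) mapAG_is_zmod_morphism.

Lemma mapAGZ (s : A) (a : {ffun G -> A}) :
  mapAG phi (gscale s a) = gscale (phi s) (mapAG phi a).
Proof. by apply/ffunP=> g; rewrite !ffunE rmorphM. Qed.

Lemma mapAG_gelt (g : G) : mapAG phi (gelt A g) = gelt B g.
Proof. by apply/ffunP=> h; rewrite !ffunE rmorph_nat. Qed.

Lemma mapIelt_is_zmod_morphism n : zmod_morphism (@mapIelt A B G phi n).
Proof.
by move=> a b; apply: val_inj; apply/ffunP=> g; rewrite /= !ffunE rmorphB.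
Qed.

HB.instance Definition _ n :=
  GRing.isZmodMorphism.Build _ _ (@mapIelt A B G phi n)
    (@mapIelt_is_zmod_morphism n).

Lemma piQn_eq0 n (a : Ielt A G n) :
  (\pi_(Qn A G n) a == 0) = (Ival a \in @Ipred A G n.+1).
Proof. by rewrite -(raddf0 (\pi_(Qn A G n))) -Quotient.idealrBE subr0. Qed.

End GroupAlgebraFacts.

Section RatCoefficients.
Variables (G : finGroupType) (R : comNzRingType).
Hypothesis intr_inj : injective (fun z : int => z%:~R : R).
Hypothesis fraction : forall r : R, exists (w : R) (d : nat) (m : int),
  w *+ d = 1 /\ r = w *~ m.

Local Notation mapz := (@mapAG int R G intr).

Definition scaled_int n (x : {ffun G -> R}) :=
  exists (w : R) (d : nat) (y : {ffun G -> int}),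
    [/\ w *+ d = 1, y \in @Ipred int G n & x = gscale w (mapz y)].

Lemma scaled_int0 n : scaled_int n 0.
Proof.
exists 1, 1%N, 0; split; rewrite ?rpred0 //.
by apply/ffunP=> g; rewrite !ffunE rmorph0 mulr0.
Qed.

Lemma scaled_intD n x1 x2 :
  scaled_int n x1 -> scaled_int n x2 -> scaled_int n (x1 + x2).
Proof.
move=> [w1 [d1 [y1 [wd1 y1n ->]]]] [w2 [d2 [y2 [wd2 y2n ->]]]].
exists (w1 * w2), (d1 * d2)%N, (y1 *+ d2 + y2 *+ d1).
split; [exact: mulrn_eq1M | by rewrite rpredD ?rpredMn |].
exact: (biadd_common_denomD (biadditive_comp mapz idfun (@gscale_biadditive R G))
  _ _ wd1 wd2).
Qed.

Lemma scaled_int_all x : scaled_int 0 x.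
Proof.
have -> : x = \sum_(g : G) gscale (x g) (gelt R g).
  apply/ffunP=> h; rewrite sum_ffunE (bigD1 h) //= big1 => [|g hg].
    by rewrite !ffunE eqxx mulr1 addr0.
  by rewrite !ffunE eq_sym (negbTE hg) mulr0.
apply: (big_ind (scaled_int 0)); [exact: scaled_int0 | exact: scaled_intD |].
move=> g _; have [w [d [m [wd ->]]]] := fraction (x g).
exists w, d, (gscale m (gelt int g)); split; first by [].
  by apply/asboolP.
by rewrite mapAGZ mapAG_gelt gscaleA mulrzr.
Qed.

Lemma Ipred_scaled_int n x : x \in @Ipred R G n -> scaled_int n x.
Proof.
elim: n x => [x _|k IH x]; first exact: scaled_int_all.
move=> /asboolP [s [s_fact ->]]; rewrite big_seq.
apply: (big_ind (scaled_int k.+1)); [exact: scaled_int0 | exact: scaled_intD |].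
move=> p /s_fact [aug_p1 p2k].
have [w1 [d1 [y1 [wd1 _ p1E]]]] := scaled_int_all p.1.
have [w2 [d2 [y2 [wd2 y2k p2E]]]] := IH _ (asboolT p2k).
have aug_y1 : aug y1 = 0.
  apply: intr_inj; apply/eqP; rewrite /= rmorph0.
  by rewrite -(mulrI_eq0 _ (mulrn_eq1_lreg wd1)) -mapAG_aug -augZ -p1E aug_p1.
exists (w1 * w2), (d1 * d2)%N, (conv y1 y2); split; first exact: mulrn_eq1M.
  apply/asboolP; exists [:: (y1, y2)]; split; last by rewrite big_seq1.
  by move=> q; rewrite inE => /eqP -> /=; split; last apply/asboolP.
by rewrite p1E p2E convZl convZr gscaleA mapAG_conv.
Qed.

Section ScalarExtension.
Variable n : nat.

Local Notation QZ := (Qn int G n).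
Local Notation QR := (Qn R G n).
Local Notation piZ := (\pi_QZ).
Local Notation piR := (\pi_QR).
Local Notation mI := (@mapIelt int R G intr n).

Lemma Ielt_scaled_int (x : Ielt R G n) :
  exists (w : R) (d : nat) (y : Ielt int G n), w *+ d = 1 /\ x = w *: mI y.
Proof.
have [w [d [y [wd yn xE]]]] := Ipred_scaled_int (Ivalin x).
by exists w, d, (MkIelt yn); split=> //; apply: val_inj.
Qed.

Lemma Qn_scaled_int (q : QR) : exists wdy : R * nat * Ielt int G n,
  wdy.1.1 *+ wdy.1.2 = 1 /\ q = piR (wdy.1.1 *: mI wdy.2).
Proof.
have [w [d [y [wd xE]]]] := Ielt_scaled_int (generic_quotient.repr q).
by exists (w, d, y); rewrite /= -xE reprK.
Qed.

Lemma scale_mapI_biadditive : biadditive (fun (w : R) y => piR (w *: mI y)).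
Proof. exact: biadditive_comp mI piR (scale_biadditive _). Qed.

Definition coef_ext (r : R) (q : QZ) : QR :=
  piR (r *: mI (generic_quotient.repr q)).

Lemma coef_ext_pi r a : coef_ext r (piZ a) = piR (r *: mI a).
Proof.
apply/eqP; rewrite -subr_eq0 -!raddfB piQn_eq0.
apply: (Ipred_scale r (mapAG_Ipred _ _)); rewrite -piQn_eq0.
by rewrite raddfB subr_eq0; apply/eqP; exact: reprK.
Qed.

Lemma coef_ext_biadditive : biadditive coef_ext.
Proof.
split=> [q r s | r q1 q2]; first by rewrite /coef_ext scalerBl raddfB.
by rewrite -[q1]reprK -[q2]reprK -raddfB !coef_ext_pi raddfB scalerBr raddfB.
Qed.

Variables (T : lmodType R) (t : R -> QZ -> T).
Hypothesis t_biadd : biadditive t.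
Hypothesis t_scale : forall (s r : R) (x : QZ), t (s * r) x = s *: t r x.
Hypothesis t_uniq : forall (V : zmodType) (h1 h2 : {additive T -> V}),
  (forall r x, h1 (t r x) = h2 (t r x)) -> h1 =1 h2.

Lemma tensor_uniq (V : zmodType) (h1 h2 : T -> V) :
  zmod_morphism h1 -> zmod_morphism h2 ->
  (forall r x, h1 (t r x) = h2 (t r x)) -> h1 =1 h2.
Proof.
move=> h1_add h2_add.
exact: (t_uniq (h1 := additive_of h1_add) (h2 := additive_of h2_add)).
Qed.

Lemma tensor_pi_biadditive : biadditive (fun (w : R) y => t w (piZ y)).
Proof. exact: biadditive_comp piZ idfun t_biadd. Qed.

Lemma tensor_pi_eq0 w d y :
  w *+ d = 1 -> piR (w *: mI y) = 0 -> t w (piZ y) = 0.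
Proof.
move=> wd /eqP; rewrite piQn_eq0 => /Ipred_scaled_int.
move=> [w' [d' [v [wd' vn yE]]]].
have yv : Ival y *+ d' = v *+ d.
  apply/ffunP=> g; apply: intr_inj.
  move/ffunP: yE => /(_ g); rewrite !ffunE => yvg.
  by rewrite /= !ffunMnE !rmorphMn (mulrn_eq1_cross wd wd' yvg).
have piZ_y : piZ y *+ d' = 0.
  apply/eqP; rewrite -raddfMn piQn_eq0.
  have -> : Ival (y *+ d') = Ival y *+ d'.
    exact: (raddfMn (val : {additive Ielt int G n -> _})).
  by rewrite yv rpredMn.
by rewrite -[w]mulr1 -wd' mulrnAr biadd_mulrn // piZ_y biadd0r.
Qed.

Lemma tensor_pi_eq w w' d d' y y' : w *+ d = 1 -> w' *+ d' = 1 ->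
  piR (w *: mI y) = piR (w' *: mI y') -> t w (piZ y) = t w' (piZ y').
Proof.
move=> wd wd' eq_pi; apply/eqP; rewrite -subr_eq0.
rewrite (biadd_common_denomB tensor_pi_biadditive _ _ wd wd'); apply/eqP.
apply: tensor_pi_eq0 (mulrn_eq1M wd wd') _.
by rewrite -(biadd_common_denomB scale_mapI_biadditive _ _ wd wd') eq_pi subrr.
Qed.

Variable f : {additive T -> QR}.
Hypothesis f_pure : forall r x, f (t r x) = coef_ext r x.

Lemma coef_ext_scalable : scalable f.
Proof.
move=> s u; apply: (@tensor_uniq _ (fun u => f (s *: u)) (fun u => s *: f u)).
- by move=> x y; rewrite scalerBr raddfB.
- by move=> x y; rewrite raddfB scalerBr.
by move=> r x; rewrite -t_scale !f_pure -[x]reprK !coef_ext_pi -scalerA pi_scale.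
Qed.

Definition coef_ext_inv (q : QR) : T :=
  let wdy := sval (cid (Qn_scaled_int q)) in t wdy.1.1 (piZ wdy.2).

Lemma coef_ext_invE w d y :
  w *+ d = 1 -> coef_ext_inv (piR (w *: mI y)) = t w (piZ y).
Proof.
move=> wd; have [wd' eq_pi] := svalP (cid (Qn_scaled_int (piR (w *: mI y)))).
exact: tensor_pi_eq wd' wd (esym eq_pi).
Qed.

Lemma coef_ext_inv_is_zmod_morphism : zmod_morphism coef_ext_inv.
Proof.
move=> q1 q2.
have [[[w1 d1] y1] [/= wd1 ->]] := Qn_scaled_int q1.
have [[[w2 d2] y2] [/= wd2 ->]] := Qn_scaled_int q2.
rewrite (biadd_common_denomB scale_mapI_biadditive _ _ wd1 wd2) /=.
rewrite (coef_ext_invE _ (mulrn_eq1M wd1 wd2)).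
rewrite (coef_ext_invE _ wd1) (coef_ext_invE _ wd2).
by rewrite (biadd_common_denomB tensor_pi_biadditive _ _ wd1 wd2).
Qed.

Lemma coef_ext_invK : cancel coef_ext_inv f.
Proof.
move=> q; have [[[w d] y] [/= wd ->]] := Qn_scaled_int q.
by rewrite (coef_ext_invE _ wd) f_pure coef_ext_pi.
Qed.

Lemma coef_extK : cancel f coef_ext_inv.
Proof.
apply: (@tensor_uniq _ (coef_ext_inv \o f) id) => [x y | x y | r x] //=.
  by rewrite raddfB coef_ext_inv_is_zmod_morphism.
rewrite f_pure -[x]reprK coef_ext_pi; have [w [d [m [wd ->]]]] := fraction r.
rewrite -scalerMzl scalerMzr -raddfMz (coef_ext_invE _ wd).
by rewrite biadd_mulrz // raddfMz.
Qed.

End ScalarExtension.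

End RatCoefficients.

Theorem lemma1p1 (G : finGroupType) (R : comNzRingType)
    (iota : {rmorphism R -> rat}) (n : nat)
    (T : lmodType R) (t : R -> Qn int G n -> T) :
  abelian [set: G] -> injective iota ->
  is_scalar_ext_tensor t ->
  exists f : {linear T -> Qn R G n},
    (forall (r : R) (a : Ielt int G n),
        f (t r (\pi_(Qn int G n) a)) = \pi_(Qn R G n) (r *: mapIelt intr a))
    /\ bijective f.
Proof.
move=> _ iota_inj [t_biadd t_scale t_univ t_uniq].
have intr_inj := rmorph_rat_intr_inj iota.
have fraction := rat_subring_fraction iota_inj.
have [f f_pure] := t_univ _ _ (coef_ext_biadditive G R n).
exists (linear_of (raddfB f) (coef_ext_scalable t_scale t_uniq f_pure)); split.
  by move=> r a; rewrite /= f_pure coef_ext_pi.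
exists (coef_ext_inv intr_inj fraction t).
  exact: coef_extK.
exact: coef_ext_invK.
Qed.
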